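(* Let $a_0, a_1 \in \mathbb{Z}$ and let $u_0, u_1$ be positive rational numbers with $u_0 > u_1$ such that \[ a_0 \arctan u_0 + a_1 \arctan u_1 = \frac{\pi}{4}. \] Then the real number $\alpha := \dfrac{\arctan u_0}{\arctan u_1}$ is irrational. *)

From Stdlib Require Import Reals QArith Qreals.
Open Scope R_scope.

Definition irrational (x : R) : Prop := ~ exists q : Q, x = Q2R q.

(* If atan u0 / atan u1 = p/q, the relation gives a nonzero integer K with K atan u0 and
   K atan u1 both in pi Z.  Then theta = 2 atan u satisfies cos (K theta) = 1 while
   2 cos theta = 2 (1 - u^2) / (1 + u^2) is rational; the Lucas sequence
   V_n = q^n 2 cos (n theta) shows, as in Niven's theorem, that 2 cos theta is then an
   integer.  For u > 0 this leaves 2 cos theta in {-1, 0, 1}, i.e. u^2 = 3, u = 1 or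
   3 u^2 = 1, and only u = 1 is rational.  So u0 = u1 = 1, contradicting u1 < u0. *)
From Stdlib Require Import Reals QArith Qreals ZArith Znumtheory Zpow_facts Lia Lra.
Open Scope R_scope.

Lemma Q2R_lowest_terms (r : Q) :
  exists p q : Z, (0 < q)%Z /\ Z.gcd p q = 1%Z /\ IZR p = IZR q * Q2R r.
Proof.
  destruct r as [n d]; set (g := Z.gcd n (Z.pos d)).
  assert (Hg0 : g <> 0%Z) by (unfold g; intro H; apply Z.gcd_eq_0 in H; lia).
  destruct (Z.gcd_divide_l n (Z.pos d)) as [p Hp].
  destruct (Z.gcd_divide_r n (Z.pos d)) as [q Hq]; fold g in Hp, Hq.
  exists p, q; split; [pose proof (Z.gcd_nonneg n (Z.pos d)); nia|]; split.
  - pose proof (Z.gcd_div_gcd n (Z.pos d) g Hg0 eq_refl) as H.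
    rewrite Hp, Hq, !Z.div_mul in H by exact Hg0; exact H.
  - unfold Q2R; simpl; rewrite Hq, Hp, !mult_IZR.
    assert (IZR g <> 0) by (apply not_0_IZR; exact Hg0).
    assert (IZR q <> 0) by (intro E; apply eq_IZR in E; lia).
    field; auto.
Qed.

Lemma coprime_divide_pow (p q k : Z) :
  (0 <= k)%Z -> Z.gcd p q = 1%Z -> (q | p ^ k)%Z -> (q | 1)%Z.
Proof.
  intros Hk Hpq Hd.
  apply Zgcd_1_rel_prime in Hpq; apply rel_prime_sym in Hpq.
  destruct (rel_prime_Zpower_r k q p Hk Hpq) as [_ _ Hmax].
  exact (Hmax q (Z.divide_refl q) Hd).
Qed.

Lemma Q_square_neq_3 (r : Q) : Q2R r * Q2R r <> 3.
Proof.
  intros H; destruct (Q2R_lowest_terms r) as (p & q & Hq & Hpq & Hr).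
  assert (E : (p * p = 3 * (q * q))%Z).
  { apply eq_IZR; rewrite !mult_IZR, Hr, <- H; ring. }
  assert (Hd : (q | p ^ 2)%Z) by (exists (3 * q)%Z; lia).
  apply coprime_divide_pow in Hd; [|lia|exact Hpq].
  apply Z.divide_1_r in Hd; destruct Hd as [->|]; [|lia].
  destruct (Z.le_gt_cases (Z.abs p) 1); nia.
Qed.

Fixpoint lucasV (P Qc : Z) (n : nat) : Z :=
  match n with
  | O => 2
  | S O => P
  | S (S k as m) => P * lucasV P Qc m - Qc * lucasV P Qc k
  end.

Lemma lucasV_cos (P Qc : Z) (s theta : R) (n : nat) :
  IZR P = s * (2 * cos theta) -> IZR Qc = s * s ->
  IZR (lucasV P Qc n) = s ^ n * (2 * cos (INR n * theta)).
Proof.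
  intros HP HQ.
  revert n; enough (H : forall n, IZR (lucasV P Qc n) = s ^ n * (2 * cos (INR n * theta)) /\
                        IZR (lucasV P Qc (S n)) = s ^ S n * (2 * cos (INR (S n) * theta)))
    by apply H.
  induction n as [|n [IH0 IH1]].
  - simpl; rewrite Rmult_0_l, !Rmult_1_l, cos_0, HP; split; ring.
  - split; [exact IH1|].
    change (lucasV P Qc (S (S n))) with (P * lucasV P Qc (S n) - Qc * lucasV P Qc n)%Z.
    rewrite minus_IZR, !mult_IZR, IH0, IH1, HP, HQ.
    (* cos ((n+2) t) + cos (n t) = 2 cos t cos ((n+1) t) *)
    replace (INR (S (S n)) * theta) with (INR (S n) * theta + theta) by (rewrite !S_INR; ring).
    replace (INR n * theta) with (INR (S n) * theta - theta) by (rewrite S_INR; ring).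
    rewrite cos_plus, cos_minus; simpl pow; ring.
Qed.

Lemma lucasV_mod (P Qc : Z) (n : nat) :
  (Qc | lucasV P Qc (S n) - P ^ Z.of_nat (S n))%Z.
Proof.
  induction n as [|n [m Hm]].
  - exists 0%Z; simpl; lia.
  - change (lucasV P Qc (S (S n))) with (P * lucasV P Qc (S n) - Qc * lucasV P Qc n)%Z.
    rewrite (Nat2Z.inj_succ (S n)), Z.pow_succ_r by lia.
    exists (P * m - lucasV P Qc n)%Z; rewrite Z.mul_sub_distr_r, <- Z.mul_assoc, <- Hm; ring.
Qed.

Lemma two_cos_rational_integral (theta : R) (c : Q) (n : nat) (m : Z) :
  Q2R c = 2 * cos theta -> 2 * cos (INR (S n) * theta) = IZR m ->
  exists k : Z, Q2R c = IZR k.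
Proof.
  intros Hc Hm; destruct (Q2R_lowest_terms c) as (p & q & Hq & Hpq & Hp).
  assert (HV : lucasV p (q * q) (S n) = (q ^ Z.of_nat (S n) * m)%Z).
  { apply eq_IZR; rewrite mult_IZR, <- pow_IZR.
    rewrite (lucasV_cos p (q * q) (IZR q) theta); [now rewrite Hm| |apply mult_IZR].
    rewrite Hp, Hc; reflexivity. }
  assert (Hd : (q | p ^ Z.of_nat (S n))%Z).
  { destruct (lucasV_mod p (q * q) n) as [a Ha]; rewrite HV in Ha.
    exists (q ^ Z.of_nat n * m - a * q)%Z.
    rewrite Nat2Z.inj_succ, (Z.pow_succ_r p), (Z.pow_succ_r q) in Ha by lia.
    rewrite Nat2Z.inj_succ, Z.pow_succ_r by lia.
    replace (p * p ^ Z.of_nat n)%Z with (q * q ^ Z.of_nat n * m - a * (q * q))%Z by lia; ring. }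
  apply coprime_divide_pow in Hd; [|lia|exact Hpq].
  apply Z.divide_1_r in Hd; destruct Hd as [->| ->]; [|lia].
  exists p; lra.
Qed.

Lemma cos_2atan (u : R) : cos (2 * atan u) = (1 - u * u) / (1 + u * u).
Proof.
  rewrite cos_2a_cos, cos_atan.
  assert (Hp : 0 < 1 + u²) by (unfold Rsqr; nra).
  pose proof (sqrt_sqrt (1 + u²) (Rlt_le _ _ Hp)) as Hs.
  pose proof (sqrt_lt_R0 _ Hp); unfold Rsqr in *.
  field_simplify_eq; [|lra].
  rewrite <- !Rsqr_pow2; unfold Rsqr; rewrite Hs; ring.
Qed.

Lemma rational_atan_commensurable_PI (u : Q) (M j : Z) :
  0 < Q2R u -> M <> 0%Z -> IZR M * atan (Q2R u) = IZR j * PI -> Q2R u = 1.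
Proof.
  intros Hu HM Hrel; set (U := Q2R u) in *.
  assert (HUQ : ~ (u == 0)%Q) by (intro E; apply Qeq_eqR in E; unfold Q2R at 2 in E; simpl in E; fold U in E; lra).
  set (c := (2 * (1 - u * u) / (1 + u * u))%Q).
  assert (Hc : Q2R c = 2 * cos (2 * atan U)).
  { assert (Hd : ~ (1 + u * u == 0)%Q).
    { intro E; apply Qeq_eqR in E.
      rewrite Q2R_plus, Q2R_mult, RMicromega.Q2R_1, RMicromega.Q2R_0 in E; fold U in E; nra. }
    assert (H2 : Q2R 2 = 2) by (unfold Q2R; simpl; field).
    unfold c; rewrite Q2R_div, Q2R_mult, Q2R_minus, Q2R_plus, !Q2R_mult, H2, RMicromega.Q2R_1
      by exact Hd.
    rewrite cos_2atan; fold U; field; nra. }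
  (* 2 |M| atan u lies in 2 pi Z, so cos (|M| theta) = 1 for theta = 2 atan u *)
  assert (Hcos : 2 * cos (INR (S (Z.abs_nat M - 1)) * (2 * atan U)) = IZR 2).
  { replace (INR (S (Z.abs_nat M - 1))) with (IZR (Z.abs M))
      by (rewrite INR_IZR_INZ; f_equal; lia).
    rewrite abs_IZR.
    replace (Rabs (IZR M) * (2 * atan U)) with (2 * (Rabs (IZR M) * atan U)) by ring.
    rewrite cos_2a_sin, (sin_eq_0_1 (Rabs (IZR M) * atan U)); [simpl; ring|].
    destruct (Rcase_abs (IZR M)); [exists (- j)%Z; rewrite Rabs_left, opp_IZR by lra
                                  |exists j; rewrite Rabs_right by lra]; lra. }
  destruct (two_cos_rational_integral _ c _ _ Hc Hcos) as [k Hk].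
  assert (Hc2 : Q2R c * (1 + U * U) = 2 * (1 - U * U)) by (rewrite Hc, cos_2atan; field; nra).
  rewrite Hk in Hc2.
  assert (Hk2 : (-2 < k < 2)%Z) by (split; apply lt_IZR; nra).
  assert (k = -1 \/ k = 0 \/ k = 1)%Z as [-> | [-> | ->]] by lia; simpl in Hc2.
  - exfalso; apply (Q_square_neq_3 u); fold U; lra.
  - nra.
  - exfalso; apply (Q_square_neq_3 (/ u)); rewrite Q2R_inv by exact HUQ; fold U.
    field_simplify_eq; lra.
Qed.

Lemma rational_ratio_commensurable_PI (a0 a1 : Z) (t0 t1 : R) (r : Q) :
  0 < t1 -> IZR a0 * t0 + IZR a1 * t1 = PI / 4 -> t0 / t1 = Q2R r ->
  exists K j0 j1 : Z, K <> 0%Z /\ IZR K * t0 = IZR j0 * PI /\ IZR K * t1 = IZR j1 * PI.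
Proof.
  intros Ht1 Hrel Hr; destruct (Q2R_lowest_terms r) as (p & q & Hq & _ & Hp).
  assert (HqR : 0 < IZR q) by (apply IZR_lt; lia).
  assert (Hpq : IZR p * t1 = IZR q * t0) by (rewrite Hp, <- Hr; field; lra).
  set (K := (4 * (a0 * p + a1 * q))%Z).
  assert (HK1 : IZR K * t1 = IZR q * PI).
  { unfold K; rewrite mult_IZR, plus_IZR, !mult_IZR.
    transitivity (4 * (IZR a0 * (IZR p * t1) + IZR q * (IZR a1 * t1))); [ring|].
    rewrite Hpq, <- Rmult_assoc, (Rmult_comm (IZR a0)), Rmult_assoc, <- Rmult_plus_distr_l, Hrel.
    field. }
  exists K, p, q; split; [|split; [|exact HK1]].
  - intro E; rewrite E in HK1; simpl in HK1; pose proof PI_RGT_0; nra.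
  - apply Rmult_eq_reg_l with (IZR q); [|lra].
    replace (IZR q * (IZR K * t0)) with (IZR K * (IZR q * t0)) by ring.
    rewrite <- Hpq, <- Rmult_assoc, (Rmult_comm (IZR K)), Rmult_assoc, HK1; ring.
Qed.

Theorem proposition1 (a0 a1 : Z) (u0 u1 : Q)
  (hu0 : 0 < Q2R u0) (hu1 : 0 < Q2R u1) (hlt : Q2R u1 < Q2R u0)
  (hrel : IZR a0 * atan (Q2R u0) + IZR a1 * atan (Q2R u1) = PI / 4) :
  irrational (atan (Q2R u0) / atan (Q2R u1)).
Proof.
  intros [r Hr].
  assert (Ht1 : 0 < atan (Q2R u1)) by (rewrite <- atan_0; apply atan_increasing, hu1).
  destruct (rational_ratio_commensurable_PI a0 a1 _ _ r Ht1 hrel Hr)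
    as (K & j0 & j1 & HK & H0 & H1).
  pose proof (rational_atan_commensurable_PI u0 K j0 hu0 HK H0).
  pose proof (rational_atan_commensurable_PI u1 K j1 hu1 HK H1).
  lra.
Qed.
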